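(* For every measurable space $X$ define $\lambda_X:\mathbb DFX\to F\mathbb DX$ by $$\lambda_X=\big\langle g\circ\mathbb D\pi^{1}_X,\ g\circ\mathbb D\pi^{*}_X,\ a\mapsto\mathbb D\pi^a_X\big\rangle,$$ where $g:\mathbb D\mathbb I\to\mathbb I$, $g(m)=\int_{\mathbb I}\mathrm{id}_{\mathbb I}\,dm$. Then each $\lambda_X$ is measurable, and for every measurable $f:X\to Y$: $\lambda_Y\circ\mathbb DFf=F\mathbb Df\circ\lambda_X$; $\lambda_X\circ\eta_{FX}=F\eta_X$; and $F\mu_X\circ\lambda_{\mathbb DX}\circ\mathbb D\lambda_X=\lambda_X\circ\mu_{FX}$. Consequently $\lambda:\mathbb DF\Rightarrow F\mathbb D$ is a distributive law of the monad $\mathbb D$ over the functor $F$.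
   Context: Work in $\mathbf{Meas}$. $\mathbb I=[0,1]$ with its Borel $\sigma$-algebra; $A$ a finite alphabet. For a measurable space $(X,\Sigma_X)$, $\mathbb DX$ is the set of sub-probability measures on $X$ with the $\sigma$-algebra generated by the maps $e^X_S(m)=m(S)$, $S\in\Sigma_X$; $\mathbb Df(m)=m\circ f^{-1}$; the sub-Giry monad $(\mathbb D,\eta,\mu)$ has $\eta_X(x)(S)=\mathbf 1_S(x)$ and $\mu_X(\Phi)(S)=\int_{\mathbb DX}e^X_S\,d\Phi$. The functor $F$ is $FX=\mathbb I\times\mathbb I\times X^A$ with the product $\sigma$-algebra and $Ff=\mathrm{id}_{\mathbb I}\times\mathrm{id}_{\mathbb I}\times f^A$. We write $\mathrm{id}_{FX}=\langle\pi^1_X,\pi^*_X,a\mapsto\pi^a_X\rangle$, i.e. $\pi^1_X,\pi^*_X:FX\to\mathbb I$ are the first two projections and $\pi^a_X:FX\to X$ is the projection onto the $a$-component. A distributive law is a natural transformation $\lambda:\mathbb DF\Rightarrow F\mathbb D$ with $\lambda_X\circ\eta_{FX}=F\eta_X$ and $\lambda_X\circ\mu_{FX}=F\mu_X\circ\lambda_{\mathbb DX}\circ\mathbb D\lambda_X$. *)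

From HB Require Import structures.
From mathcomp Require Import all_boot all_order all_algebra.
From mathcomp Require Import all_classical all_reals all_analysis.
From mathcomp Require Export giry.

Set Implicit Arguments.
Unset Strict Implicit.
Unset Printing Implicit Defensive.

Import Order.TTheory GRing.Theory Num.Theory.
Local Open Scope classical_set_scope.
Local Open Scope ring_scope.

Section unit_interval.
Variable R : realType.

Definition I01 : Type := {x : R | (0 <= x <= 1)%R}.

HB.instance Definition _ := Choice.on I01.

Lemma I01_0_subproof : (0 <= (0:R) <= 1)%R.
Proof. by rewrite lexx ler01. Qed.

Definition I01_0 : I01 := exist _ 0 I01_0_subproof.

HB.instance Definition _ := isPointed.Build I01 I01_0.

Definition I01_measurable : set (set I01) :=
  preimage_set_system [set: I01] (@proj1_sig R _) measurable.

Let I01_sigma : sigma_algebra [set: I01] I01_measurable.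
Proof. exact/sigma_algebra_preimage/sigma_algebra_measurable. Qed.

Let I01_measurable0 : I01_measurable set0.
Proof. by case: I01_sigma. Qed.

Let I01_measurableC (U : set I01) : I01_measurable U -> I01_measurable (~` U).
Proof. by case: I01_sigma => _ hC _ /hC; rewrite setTD. Qed.

Let I01_measurableU (F : (set I01)^nat) :
  (forall i, I01_measurable (F i)) -> I01_measurable (\bigcup_i F i).
Proof. by case: I01_sigma => _ _ hU /hU. Qed.

Definition I01_display : measure_display. Proof. by constructor. Qed.

HB.instance Definition _ := @isMeasurable.Build I01_display I01 I01_measurable
  I01_measurable0 I01_measurableC I01_measurableU.

End unit_interval.

Section expo.
Variables (A : finType) (d : measure_display) (X : measurableType d).

Definition expo : Type := {ffun A -> X}.

HB.instance Definition _ := Choice.on expo.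
HB.instance Definition _ := isPointed.Build expo [ffun=> point].

Definition expo_measurable : set (set expo) :=
  <<s \bigcup_(a in [set: A]) preimage_set_system [set: expo] (fun h : expo => h a)
      measurable >>.

Let expo_measurable0 : expo_measurable set0.
Proof. exact: sigma_algebra0. Qed.

Let expo_measurableC (U : set expo) : expo_measurable U -> expo_measurable (~` U).
Proof. exact: sigma_algebraC. Qed.

Let expo_measurableU (F : (set expo)^nat) :
  (forall i, expo_measurable (F i)) -> expo_measurable (\bigcup_i F i).
Proof. exact: sigma_algebra_bigcup. Qed.

Definition expo_display : measure_display. Proof. by constructor. Qed.

HB.instance Definition _ := @isMeasurable.Build expo_display expo expo_measurable
  expo_measurable0 expo_measurableC expo_measurableU.

Lemma measurable_expo_proj (a : A) : measurable_fun [set: expo] (fun h : expo => h a).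
Proof.
move=> _ B mB; apply: sub_sigma_algebra; exists a => //.
by exists B.
Qed.

End expo.

Notation FF R A X := (I01 R * I01 R * expo A X)%type.

Section functorF.
Variables (R : realType) (A : finType).


Definition Fmap d1 d2 (X : measurableType d1) (Y : measurableType d2)
  (f : X -> Y) : FF R A X -> FF R A Y :=
  fun z => (z.1.1, z.1.2, [ffun a => f (z.2 a)] : expo A Y).

Lemma measurable_Fmap d1 d2 (X : measurableType d1) (Y : measurableType d2)
  (f : X -> Y) : measurable_fun [set: X] f -> measurable_fun [set: FF R A X] (Fmap f).
Proof.
move=> mf; apply: measurable_fun_pair.
  apply: measurable_fun_pair.
    exact: measurableT_comp measurable_fst measurable_fst.
  exact: measurableT_comp measurable_snd measurable_fst.
apply: (@measurability _ _ _ _ _ _ (\bigcup_(a in [set: A])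
   preimage_set_system [set: expo A Y] (fun h : expo A Y => h a) measurable) erefl).
move=> _ [C [a _ [B mB <-]] <-].
rewrite !setTI -comp_preimage.
have -> : (fun h : expo A Y => h a) \o (fun z : FF R A X => [ffun a0 => f (z.2 a0)] : expo A Y)
  = f \o (fun h : expo A X => h a) \o snd by apply/funext => z /=; rewrite ffunE.
rewrite -[X in measurable X]setTI.
have mh : measurable_fun [set: FF R A X] (f \o (fun h : expo A X => h a) \o snd).
  exact: (measurableT_comp (measurableT_comp mf (measurable_expo_proj a)) measurable_snd).
exact: mh.
Qed.

Definition pi1 d (X : measurableType d) (z : FF R A X) : I01 R := z.1.1.
Definition piS d (X : measurableType d) (z : FF R A X) : I01 R := z.1.2.
Definition pia d (X : measurableType d) (a : A) (z : FF R A X) : X := z.2 a.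

Lemma measurable_pi1 d (X : measurableType d) : measurable_fun [set: FF R A X] (@pi1 _ X).
Proof. exact: measurableT_comp measurable_fst measurable_fst. Qed.

Lemma measurable_piS d (X : measurableType d) : measurable_fun [set: FF R A X] (@piS _ X).
Proof. exact: measurableT_comp measurable_snd measurable_fst. Qed.

Lemma measurable_pia d (X : measurableType d) (a : A) :
  measurable_fun [set: FF R A X] (@pia _ X a).
Proof. exact: measurableT_comp (measurable_expo_proj a) measurable_snd. Qed.

(* g : D I -> I, g(m) = \int_I id dm.  The value always lies in [0,1]
   (m is a sub-probability measure), so the default of insubd is never used. *)
Definition gmean (m : giry (I01 R) R) : I01 R :=
  insubd (I01_0 R) (fine (\int[m]_x ((proj1_sig x)%:E))%E).

Definition lam d (X : measurableType d) (m : giry (FF R A X) R) : FF R A (giry X R) :=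
  (gmean (giry_map (@measurable_pi1 _ X) m),
   gmean (giry_map (@measurable_piS _ X) m),
   [ffun a => giry_map (@measurable_pia _ X a) m] : expo A (giry X R)).

Definition eqFD d (X : measurableType d) (z1 z2 : FF R A (giry X R)) : Prop :=
  z1.1 = z2.1 /\ forall a : A, z1.2 a ≡μ z2.2 a.

End functorF.

From HB Require Import structures.
From mathcomp Require Import all_boot all_order all_algebra.
From mathcomp Require Import all_classical all_reals all_analysis.
From mathcomp Require Import giry measurable_realfun.
Import Order.TTheory GRing.Theory Num.Theory.
Local Open Scope classical_set_scope.
Local Open Scope ereal_scope.

(* The measure components of lambda are pushforwards along the projections of F,
   so their laws are the functor laws of D.  The interval components apply the
   mean g, and all that is needed of g is that it is measurable (integration
   against a nonnegative measurable function is) and compatible with the monad: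
   the mean of a Dirac mass is its point, and integrating against a join
   integrates the inner integrals. *)

Section interval_mean.
Variable R : realType.

Definition ereal_of_I01 (x : I01 R) : \bar R := (proj1_sig x)%:E.

Lemma measurable_I01_val : measurable_fun [set: I01 R] (@proj1_sig R _).
Proof. by move=> _ B mB; exists B. Qed.

Lemma measurable_I01_of_val d (T : measurableType d) (f : T -> I01 R) :
  measurable_fun [set: T] (@proj1_sig R _ \o f) -> measurable_fun [set: T] f.
Proof. by move=> mf _ Y [B mB <-]; rewrite setTI; have := mf measurableT B mB. Qed.

Lemma measurable_ereal_of_I01 : measurable_fun [set: I01 R] ereal_of_I01.
Proof. exact/measurable_EFinP/measurable_I01_val. Qed.

Lemma ereal_of_I01_ge0 x : 0 <= ereal_of_I01 x.
Proof. by rewrite lee_fin; case: x => /= r /andP[]. Qed.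

Lemma ereal_of_I01_le1 x : ereal_of_I01 x <= 1.
Proof. by rewrite lee_fin; case: x => /= r /andP[]. Qed.

Lemma gmeanE (m : giry (I01 R) R) :
  ereal_of_I01 (gmean m) = \int[m]_x ereal_of_I01 x.
Proof.
have int_ge0 : 0 <= \int[m]_x ereal_of_I01 x.
  by apply: integral_ge0 => x _; exact: ereal_of_I01_ge0.
have int_le1 : \int[m]_x ereal_of_I01 x <= 1.
  apply: (@le_trans _ _ (\int[m]_x cst 1 x)).
    apply: ge0_le_integral => //; first by move=> x _; exact: ereal_of_I01_ge0.
      exact: measurable_ereal_of_I01.
    by move=> x _; exact: ereal_of_I01_le1.
  by rewrite integral_cst //= mul1e sprobability_setT.
have int_fin : \int[m]_x ereal_of_I01 x \is a fin_num.
  by rewrite ge0_fin_numE // (le_lt_trans int_le1) // ltey.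
rewrite /ereal_of_I01 /gmean val_insubd -/(ereal_of_I01 _).
have -> : (0 <= fine (\int[m]_x ereal_of_I01 x) <= 1)%R.
  by apply/andP; split; rewrite -lee_fin fineK.
by rewrite fineK.
Qed.

Lemma eq_gmean (m1 m2 : giry (I01 R) R) :
  \int[m1]_x ereal_of_I01 x = \int[m2]_x ereal_of_I01 x -> gmean m1 = gmean m2.
Proof. by move=> eq_int; rewrite /gmean; exact: (congr1 (insubd _ \o fine) eq_int). Qed.

Lemma measurable_gmean : measurable_fun [set: giry (I01 R) R] (@gmean R).
Proof.
apply: measurable_I01_of_val.
have -> : @proj1_sig R _ \o @gmean R = fine \o (giry_int ^~ ereal_of_I01).
  by apply/funext => m /=; rewrite /giry_int -gmeanE.
apply: measurableT_comp; first exact: fine_measurable.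
exact: measurable_giry_int measurable_ereal_of_I01 ereal_of_I01_ge0.
Qed.

Section mean_of_pushforward.
Context d (T : measurableType d) (p : T -> I01 R) (mp : measurable_fun [set: T] p).

Let measurable_ereal_p : measurable_fun [set: T] (ereal_of_I01 \o p).
Proof. exact: measurableT_comp measurable_ereal_of_I01 mp. Qed.

Lemma gmean_mapE (m : giry T R) :
  ereal_of_I01 (gmean (giry_map mp m)) = \int[m]_x ereal_of_I01 (p x).
Proof.
rewrite gmeanE -[LHS]/(giry_int _ _) giry_int_map //.
- exact: measurable_ereal_of_I01.
- exact: ereal_of_I01_ge0.
Qed.

Lemma gmean_map_ret (t : T) : gmean (giry_map mp (giry_ret t)) = p t.
Proof.
apply/val_inj/EFin_inj; rewrite -[LHS]/(ereal_of_I01 _) gmean_mapE.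
exact: giry_int_ret.
Qed.

End mean_of_pushforward.

Lemma gmean_map_join d d' (T : measurableType d) (S : measurableType d')
    (p : T -> I01 R) (mp : measurable_fun [set: T] p)
    (h : giry T R -> S) (mh : measurable_fun [set: giry T R] h)
    (q : S -> I01 R) (mq : measurable_fun [set: S] q) :
    (forall m, q (h m) = gmean (giry_map mp m)) ->
  forall M : giry (giry T R) R,
    gmean (giry_map mq (giry_map mh M)) = gmean (giry_map mp (giry_join M)).
Proof.
move=> qh M; apply/val_inj/EFin_inj; rewrite -!/(ereal_of_I01 _) !gmean_mapE.
rewrite -!/(giry_int _ _) giry_int_map; first last.
- by move=> ?; exact: ereal_of_I01_ge0.
- exact: measurableT_comp measurable_ereal_of_I01 mq.
rewrite giry_int_join; first last.
- by move=> ?; exact: ereal_of_I01_ge0.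
- exact: measurableT_comp measurable_ereal_of_I01 mp.
by apply: eq_integral => m _ /=; rewrite qh gmean_mapE.
Qed.

End interval_mean.

Lemma measurable_expoP (A : finType) d d' (T : measurableType d)
    (Y : measurableType d') (h : T -> expo A Y) :
  (forall a, measurable_fun [set: T] (fun t => h t a)) -> measurable_fun [set: T] h.
Proof.
move=> mh; apply: (@measurability _ _ _ _ _ _ (\bigcup_(a in [set: A])
  preimage_set_system [set: expo A Y] (fun g : expo A Y => g a) measurable) erefl).
move=> _ [_ [a _ [B mB <-]] <-].
by rewrite !setTI -comp_preimage -[X in measurable X]setTI; exact: mh.
Qed.

Section distributive_law.
Variables (R : realType) (A : finType).

Lemma measurable_lam d (X : measurableType d) :
  measurable_fun [set: giry (FF R A X) R] (@lam R A d X).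
Proof.
apply: measurable_fun_pair; first apply: measurable_fun_pair.
- exact: measurableT_comp (@measurable_gmean R) (measurable_giry_map _).
- exact: measurableT_comp (@measurable_gmean R) (measurable_giry_map _).
apply: measurable_expoP => a /=.
under eq_fun do rewrite ffunE.
exact: measurable_giry_map.
Qed.

Lemma lam_natural d1 d2 (X : measurableType d1) (Y : measurableType d2)
    (f : X -> Y) (mf : measurable_fun [set: X] f) (m : giry (FF R A X) R) :
  eqFD (lam (giry_map (@measurable_Fmap R A _ _ _ _ _ mf) m))
       (@Fmap R A _ _ _ _ (giry_map mf) (lam m)).
Proof.
(* [pi1 \o Fmap f] and [piS \o Fmap f] reduce to [pi1] and [piS], so the
   interval components agree by conversion. *)
split; first by congr pair; apply: eq_gmean.
move=> a S mS; rewrite /= !ffunE.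
change (m (Fmap f @^-1` (@pia R A _ Y a @^-1` S)) =
        m (@pia R A _ X a @^-1` (f @^-1` S))).
by congr (m _); apply/funext => z; rewrite /preimage /pia /Fmap /= ffunE.
Qed.

Lemma lam_ret d (X : measurableType d) (t : FF R A X) :
  eqFD (lam (giry_ret t : giry (FF R A X) R)) (@Fmap R A _ _ _ _ giry_ret t).
Proof.
split; last by move=> a S mS; rewrite /= !ffunE.
by congr pair; apply: gmean_map_ret.
Qed.

Lemma lam_join d (X : measurableType d)
    (mlam : measurable_fun [set: giry (FF R A X) R] (@lam R A d X))
    (M : giry (giry (FF R A X) R) R) :
  eqFD (@Fmap R A _ _ _ _ giry_join (lam (giry_map mlam M))) (lam (giry_join M)).
Proof.
split; first by congr pair; apply: gmean_map_join.
move=> a S mS; rewrite /= !ffunE.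
have mevS : measurable_fun [set: giry X R] (giry_ev ^~ S) by exact: measurable_giry_ev.
change (giry_int (giry_map (@measurable_pia R A _ (giry X R) a) (giry_map mlam M))
          (giry_ev ^~ S)
  = giry_int M (giry_ev ^~ (@pia R A _ X a @^-1` S))).
rewrite !giry_int_map //.
- by apply: eq_integral => m _ /=; rewrite /pia /= ffunE.
- exact: measurableT_comp mevS (@measurable_pia R A _ (giry X R) a).
Qed.

End distributive_law.

Theorem mainTheorem6 (R : realType) (A : finType) :
  (forall (d : measure_display) (X : measurableType d),
      measurable_fun [set: giry (FF R A X) R] (@lam R A d X)) /\
  (forall (d1 d2 : measure_display) (X : measurableType d1) (Y : measurableType d2)
          (f : X -> Y) (mf : measurable_fun [set: X] f) (m : giry (FF R A X) R),
      eqFD (lam (giry_map (@measurable_Fmap R A _ _ _ _ _ mf) m))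
           (@Fmap R A _ _ _ _ (giry_map mf) (lam m))) /\
  (forall (d : measure_display) (X : measurableType d) (t : FF R A X),
      eqFD (lam (giry_ret t : giry (FF R A X) R)) (@Fmap R A _ _ _ _ giry_ret t)) /\
  (forall (d : measure_display) (X : measurableType d)
          (mlam : measurable_fun [set: giry (FF R A X) R] (@lam R A d X))
          (M : giry (giry (FF R A X) R) R),
      eqFD (@Fmap R A _ _ _ _ giry_join (lam (giry_map mlam M)))
           (lam (giry_join M))).
Proof.
split; first exact: measurable_lam.
split; first exact: lam_natural.
split; first exact: lam_ret.
exact: lam_join.
Qed.
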